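(* Converting IFAs to nondeterministic finite automata requires a super-polynomial state blowup: there is no polynomial $p$ such that every IFA with $n$ states admits a nondeterministic finite automaton with at most $p(n)$ states accepting the same language.
   Context: A $\mathbb{Q}$-weighted automaton $\mathcal{A} = (Q, \Sigma, M, \alpha, \eta)$ consists of a finite state set $Q$, finite alphabet $\Sigma$, $M : \Sigma \to \mathbb{Q}^{Q\times Q}$, initial row vector $\alpha \in \mathbb{Q}^Q$, final column vector $\eta \in \mathbb{Q}^Q$; with $M(a_1\cdots a_k) = M(a_1)\cdots M(a_k)$, it assigns $L_\mathcal{A}(w) = \alpha M(w)\eta$ to each $w \in \Sigma^*$. It is an IFA if $L_\mathcal{A}(w) \in \{0,1\}$ for all $w$, and then its language is $L(\mathcal{A}) = \{w \mid L_\mathcal{A}(w) = 1\}$. The number of states of $\mathcal{A}$ is $|Q|$. *)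

From HB Require Import structures.
From mathcomp Require Import all_boot all_order all_algebra.
Set Implicit Arguments. Unset Strict Implicit. Unset Printing Implicit Defensive.
Import Order.TTheory GRing.Theory Num.Theory.
Local Open Scope ring_scope.

Record wautomaton (Sigma : finType) (n : nat) := WAut {
  wa_M : Sigma -> 'M[rat]_n;
  wa_alpha : 'rV[rat]_n;
  wa_eta : 'cV[rat]_n }.

Definition wa_word (Sigma : finType) (n : nat) (A : wautomaton Sigma n)
  (w : seq Sigma) : 'M[rat]_n :=
  foldr (fun a B => wa_M A a *m B) 1%:M w.

Definition wa_weight (Sigma : finType) (n : nat) (A : wautomaton Sigma n)
  (w : seq Sigma) : rat :=
  (wa_alpha A *m wa_word A w *m wa_eta A) 0 0.

Definition is_IFA (Sigma : finType) (n : nat) (A : wautomaton Sigma n) : Prop :=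
  forall w : seq Sigma, wa_weight A w = 0 \/ wa_weight A w = 1.

Definition wa_lang (Sigma : finType) (n : nat) (A : wautomaton Sigma n)
  (w : seq Sigma) : Prop := wa_weight A w = 1.

Record nfa (Sigma : finType) (m : nat) := NFA {
  nfa_init : {set 'I_m};
  nfa_final : {set 'I_m};
  nfa_delta : Sigma -> 'I_m -> 'I_m -> bool }.

Fixpoint nfa_acc_from (Sigma : finType) (m : nat) (B : nfa Sigma m)
  (q : 'I_m) (w : seq Sigma) : bool :=
  match w with
  | [::] => q \in nfa_final B
  | a :: w' => [exists q' : 'I_m, nfa_delta B a q q' && nfa_acc_from B q' w']
  end.

Definition nfa_accepts (Sigma : finType) (m : nat) (B : nfa Sigma m)
  (w : seq Sigma) : bool :=
  [exists q in nfa_init B, nfa_acc_from B q w].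

From HB Require Import structures.
From mathcomp Require Import all_boot all_order all_algebra.
From mathcomp Require Import mxtens zify.
Import Order.TTheory GRing.Theory Num.Theory.

Set Implicit Arguments.
Unset Strict Implicit.
Unset Printing Implicit Defensive.

(* Over a one-letter alphabet, take N = 3^K pairwise coprime moduli q_i, all
   between L = N! and L^4, and let T(u) be the value of a complete ternary tree
   of "not all equal" gates whose i-th leaf tests q_i ∤ u.  Since
   NAE(a,b,c) = a + b + c - ab - ac - bc, a weighted automaton for T is obtained
   from cyclic automata by sums, scalings and Kronecker products; each level
   at most squares the dimension, so 1 - T has an IFA with L^O(2^K) states.
   Its language contains every common multiple of the q_i and no u missed by
   exactly one q_i (NAE with exactly one true input is true).  Pumping an
   m-state unary NFA for it at a^(m P), P = prod q_i, gives a period c <= m,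
   and every q_i must divide c, so m >= P >= L^(3^K), which is not polynomial
   in L^(2^K). *)

Section Walks.
Variables (T : finType) (e : rel T).

Definition walk (k : nat) (x y : T) : Prop :=
  exists f : nat -> T, [/\ f 0 = x, f k = y & forall i, i < k -> e (f i) (f i.+1)].

Lemma walk0 x y : walk 0 x y <-> x = y.
Proof. by split=> [[f [<- <-]] | <-] //; exists (fun=> x). Qed.

Lemma walkS k x y : walk k.+1 x y <-> exists2 z, e x z & walk k z y.
Proof.
split=> [[f [f0 fk ef]] | [z exz [f [f0 fk ef]]]].
  exists (f 1); first by rewrite -f0 ef.
  by exists (fun i => f i.+1); split=> // i lt_ik; apply: ef.
exists (fun i => if i is i'.+1 then f i' else x); split=> // -[|i] lt_ik //=.
  by rewrite f0.
exact: ef.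
Qed.

Lemma walk_cat a b x y z : walk a x y -> walk b y z -> walk (a + b) x z.
Proof.
elim: a x => [|a IHa] x; first by move=> /walk0 ->.
move=> /walkS[x' exx' walk_x'y] walk_yz; rewrite addSn; apply/walkS.
by exists x'; last exact: IHa walk_x'y walk_yz.
Qed.

Lemma walk_iter c t x : walk c x x -> walk (c * t) x x.
Proof.
move=> loop; elim: t => [|t IHt]; first by rewrite muln0; apply/walk0.
by rewrite mulnS; apply: walk_cat loop IHt.
Qed.

Lemma walk_segment k (f : nat -> T) i j :
  (forall n, n < k -> e (f n) (f n.+1)) -> i <= j <= k -> walk (j - i) (f i) (f j).
Proof.
move=> ef /andP[le_ij le_jk]; exists (fun n => f (i + n)).
by split; rewrite ?addn0 ?subnKC // => n lt_n; rewrite addnS ef //; lia.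
Qed.

Lemma pigeonhole_nat (f : nat -> T) : exists i j, i < j <= #|T| /\ f i = f j.
Proof.
pose g (i : 'I_#|T|.+1) := f i.
have /injectivePn[i [j neq_ij eq_fij]] : ~~ injectiveb g.
  by apply/injectiveP=> /leq_card; rewrite card_ord ltnn.
have le_T (k : 'I_#|T|.+1) : k <= #|T| by rewrite -ltnS.
case: (ltngtP i j) => [lt_ij | lt_ji | /val_inj eq_ij].
- by exists i, j; rewrite lt_ij le_T.
- by exists j, i; rewrite lt_ji le_T.
- by rewrite eq_ij eqxx in neq_ij.
Qed.

Lemma walk_pump k x y : walk k x y -> #|T| <= k ->
  exists c, [/\ 0 < c, c <= #|T| & forall t, walk (k + c * t) x y].
Proof.
case=> f [f0 fk ef] le_Tk.
have [i [j [/andP[lt_ij le_jT] eq_fij]]] := pigeonhole_nat f.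
have le_jk : j <= k := leq_trans le_jT le_Tk.
exists (j - i); split=> [||t]; first by rewrite subn_gt0.
  exact: leq_trans (leq_subr i j) le_jT.
have prefix : walk i x (f i).
  rewrite -f0 -{1}(subn0 i); apply: walk_segment ef _.
  by rewrite (ltnW (leq_trans lt_ij le_jk)).
have loop : walk (j - i) (f i) (f i).
  by rewrite {2}eq_fij; apply: walk_segment ef _; rewrite (ltnW lt_ij).
have suffix : walk (k - j) (f i) y.
  by rewrite eq_fij -fk; apply: walk_segment ef _; rewrite le_jk leqnn.
have -> : k + (j - i) * t = i + ((j - i) * t.+1 + (k - j)).
  by rewrite mulnS !addnA subnKC ?(ltnW lt_ij) // addnAC subnKC.
exact: walk_cat prefix (walk_cat (walk_iter t.+1 loop) suffix).
Qed.

End Walks.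

Lemma nfa_acc_from_nseq (Sigma : finType) m (B : nfa Sigma m) a k q :
  nfa_acc_from B q (nseq k a) <->
  exists2 q', walk (nfa_delta B a) k q q' & q' \in nfa_final B.
Proof.
elim: k q => [|k IHk] q.
  by split=> [qF | [q' /walk0 ->]] //; exists q => //; apply/walk0.
rewrite [nfa_acc_from _ _ _]/=.
split=> [/existsP[z /andP[dqz /IHk[q' walk_zq' q'F]]] |
         [q' /walkS[z dqz walk_zq'] q'F]].
  by exists q' => //; apply/walkS; exists z.
by apply/existsP; exists z; rewrite dqz; apply/IHk; exists q'.
Qed.

Lemma unary_nfa_pump (Sigma : finType) m (B : nfa Sigma m) a k :
  nfa_accepts B (nseq k a) -> m <= k ->
  exists c, [/\ 0 < c, c <= m & forall t, nfa_accepts B (nseq (k + c * t) a)].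
Proof.
case/existsP=> q /andP[qI /nfa_acc_from_nseq[q' walk_qq' q'F]] le_mk.
have [|c [c_gt0 le_cm pump]] := walk_pump walk_qq'; first by rewrite card_ord.
rewrite card_ord in le_cm; exists c; split=> // t.
by apply/existsP; exists q; rewrite qI; apply/nfa_acc_from_nseq; exists q'.
Qed.

Lemma coprime_prodr (I : eqType) (r : seq I) (P : pred I) (F : I -> nat) m :
  {in r, forall i, P i -> coprime m (F i)} -> coprime m (\prod_(i <- r | P i) F i).
Proof.
move=> coprime_F; rewrite big_seq_cond.
apply: (big_ind (coprime m)) => [|x y|i /andP[/coprime_F]//]; first exact: coprimen1.
by rewrite coprimeMr => -> ->.
Qed.

Lemma prod_dvdn_coprime (I : eqType) (r : seq I) (F : I -> nat) c :
  uniq r -> {in r &, forall i j, i != j -> coprime (F i) (F j)} ->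
  {in r, forall i, F i %| c} -> \prod_(i <- r) F i %| c.
Proof.
elim: r => [|i r IHr] /=; first by rewrite big_nil dvd1n.
case/andP=> r'i uniq_r coprime_F dvd_c; rewrite big_cons Gauss_dvd.
- rewrite dvd_c ?mem_head ?IHr // => [j k r_j r_k | j r_j].
    by apply: coprime_F; rewrite in_cons ?r_j ?r_k orbT.
  by apply: dvd_c; rewrite in_cons r_j orbT.
apply: coprime_prodr => j r_j _; apply: coprime_F; rewrite ?mem_head //.
- by rewrite in_cons r_j orbT.
by apply: contraNneq r'i => ->.
Qed.

Lemma coprime_mul_fact_addn1 n i j : i < j <= n -> coprime (i * n`! + 1) (j * n`! + 1).
Proof.
case/andP=> lt_ij le_jn; set g := gcdn (i * n`! + 1) (j * n`! + 1).
have coprime_fact k : coprime (k * n`! + 1) n`!.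
  by rewrite coprime_sym /coprime gcdnMDl gcdn1.
have coprime_g : coprime g n`! := coprime_dvdl (dvdn_gcdl _ _) (coprime_fact i).
have g_dvd : g %| (j - i) * n`!.
  have -> : (j - i) * n`! = (j * n`! + 1) - (i * n`! + 1) by rewrite mulnBl; lia.
  by rewrite dvdn_sub ?dvdn_gcdl ?dvdn_gcdr.
have /gcdn_idPl g_fact : g %| n`!.
  apply: (@dvdn_trans (j - i)); last by apply: dvdn_fact; lia.
  by rewrite -(Gauss_dvdl _ coprime_g).
by move: coprime_g; rewrite /coprime -/g g_fact.
Qed.

Definition fact_moduli N i := i.+1 * N`! + 1.

Lemma coprime_fact_moduli N i j : i < N -> j < N -> i != j ->
  coprime (fact_moduli N i) (fact_moduli N j).
Proof.
wlog lt_ij : i j / i < j => [coprime_lt lt_iN lt_jN neq_ij | _ lt_jN _].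
  have [/coprime_lt-> // | /coprime_lt coprime_ji |] := ltngtP i j.
    by rewrite coprime_sym coprime_ji // eq_sym.
  by move/eqP; rewrite (negbTE neq_ij).
by apply: coprime_mul_fact_addn1; rewrite ltnS lt_ij.
Qed.

Lemma fact_expn_le_prod_moduli N : N`! ^ N <= \prod_(0 <= i < N) fact_moduli N i.
Proof.
rewrite -[N in _ ^ N]subn0 -prod_nat_const_nat; apply: leq_prod => i _.
by rewrite /fact_moduli mulSn -addnA leq_addr.
Qed.

Lemma fact_moduli_le N i : 3 <= N -> i < N -> 6 * fact_moduli N i <= N`! ^ 4.
Proof.
move=> le3N lt_iN; have le_NL := fact_geq N; set L := N`! in le_NL *.
have le_qL : i.+1 * L <= L ^ 2 by rewrite leq_mul2r (leq_trans lt_iN le_NL) orbT.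
have le9L : 3 ^ 2 <= L ^ 2 by rewrite leq_exp2r // (leq_trans le3N).
rewrite /fact_moduli (_ : 4 = 2 * 2) // expnM; move: (L ^ 2) le_qL le9L => y; nia.
Qed.

Lemma leq_exp2rW m n e : m <= n -> m ^ e <= n ^ e.
Proof. by move=> le_mn; case: e => // e; rewrite leq_exp2r. Qed.

Lemma mul_expn_lt m C e f : 1 < m -> C + e <= f -> C * m ^ e < m ^ f.
Proof.
move=> gt1m le_f; apply: leq_trans (leq_pexp2l (ltnW gt1m) le_f).
by rewrite expnD ltn_pmul2r ?expn_gt0 ?(ltnW gt1m) // ltn_expl.
Qed.

Lemma exists_linear_pow2_le_pow3 a b : exists2 K, 0 < K & a + b * 2 ^ K <= 3 ^ K.
Proof.
set j := (a + b).+1; exists (j + j); rewrite ?addn_gt0 // !expnD.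
have lt_ab : a + b < 2 ^ j by apply: ltn_trans (ltnSn _) (ltn_expl _ _).
have : 8 ^ j <= 9 ^ j by rewrite leq_exp2r.
rewrite (_ : 8 = 2 * 2 * 2) // (_ : 9 = 3 * 3) // !expnMn.
have : 0 < 2 ^ j by rewrite expn_gt0.
nia.
Qed.

Definition nae (a b c : bool) := ~~ ((a == b) && (b == c)).

Lemma nae_gt0 a b c : a + b + c <= 1 -> nae (0 < a) (0 < b) (0 < c) = (0 < a + b + c).
Proof. by case: a b c => [|[|a]] [|[|b]] [|[|c]]. Qed.

Section NaeTree.
Variable q : nat -> nat.

Fixpoint nae_tree K lo u : bool :=
  if K is K'.+1 then
    nae (nae_tree K' lo u) (nae_tree K' (lo + 3 ^ K') u)
      (nae_tree K' (lo + 3 ^ K' + 3 ^ K') u)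
  else ~~ (q lo %| u).

Lemma nae_tree_has K lo u :
  count (fun i => ~~ (q i %| u)) (iota lo (3 ^ K)) <= 1 ->
  nae_tree K lo u = has (fun i => ~~ (q i %| u)) (iota lo (3 ^ K)).
Proof.
elim: K lo => [|K IHK] lo /=; first by rewrite orbF.
rewrite expnS (_ : 3 * 3 ^ K = 3 ^ K + 3 ^ K + 3 ^ K); last lia.
rewrite !iotaD !count_cat !has_cat !has_count !addnA => le_count.
by rewrite !IHK ?has_count ?nae_gt0 ?addn_gt0 //; lia.
Qed.

Lemma nae_tree_dvdn K lo u :
  (forall i, lo <= i < lo + 3 ^ K -> q i %| u) -> nae_tree K lo u = false.
Proof.
move=> dvd_u; have none : ~~ has (fun i => ~~ (q i %| u)) (iota lo (3 ^ K)).
  by apply/hasPn => i; rewrite mem_iota => /dvd_u ->.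
rewrite nae_tree_has ?(negbTE none) //.
by move: none; rewrite has_count -leqNgt => /leqW.
Qed.

Lemma nae_tree_period_dvd K u c :
  (forall i j, i < 3 ^ K -> j < 3 ^ K -> i != j -> coprime (q i) (q j)) ->
  (forall i, i < 3 ^ K -> q i %| u) ->
  (forall t, ~~ nae_tree K 0 (u + c * t)) ->
  \prod_(0 <= i < 3 ^ K) q i %| c.
Proof.
move=> coprime_q dvd_u periodic; set N := 3 ^ K in coprime_q dvd_u *.
have iota_N i : (i \in index_iota 0 N) = (i < N) by rewrite mem_index_iota.
apply: prod_dvdn_coprime => [|i j|i]; rewrite ?iota_N; first exact: iota_uniq.
  exact: coprime_q.
move=> lt_iN; apply/negPn/negP => ndvd_c.
(* u + c * t is a multiple of every modulus but q i, and of q i iff q i | c. *)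
pose t := \prod_(j <- index_iota 0 N | j != i) q j.
have coprime_t : coprime (q i) t.
  by apply: coprime_prodr => j; rewrite iota_N => lt_jN; rewrite eq_sym; apply: coprime_q.
have dvd_t j : j < N -> j != i -> q j %| t.
  move=> lt_jN neq_ji; rewrite /t -big_filter (bigD1_seq j) ?dvdn_mulr //.
    by rewrite mem_filter neq_ji iota_N.
  by rewrite filter_uniq ?iota_uniq.
have ndvd_i : {in iota 0 N, (fun j => ~~ (q j %| u + c * t)) =1 pred1 i}.
  move=> j; rewrite mem_iota => lt_jN /=; have [-> | neq_ji] := eqVneq j i.
    by rewrite dvdn_addr ?dvd_u // Gauss_dvdl.
  by rewrite dvdn_add ?dvd_u ?dvdn_mull ?dvd_t.
have := periodic t; rewrite nae_tree_has -/N.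
  by move/hasPn/(_ i); rewrite ndvd_i mem_iota ?lt_iN //= eqxx => /(_ isT).
by rewrite (eq_in_count ndvd_i) count_uniq_mem ?iota_uniq ?leq_b1.
Qed.

Lemma nae_tree_nfa_states (Sigma : finType) m (B : nfa Sigma m) a K :
  (forall i j, i < 3 ^ K -> j < 3 ^ K -> i != j -> coprime (q i) (q j)) ->
  (forall k, nfa_accepts B (nseq k a) <-> ~~ nae_tree K 0 k) ->
  \prod_(0 <= i < 3 ^ K) q i <= m.
Proof.
move=> coprime_q lang_B; set P := \prod_(0 <= i < 3 ^ K) q i.
have [-> // | P_gt0] := posnP P.
have dvd_Pm i : i < 3 ^ K -> q i %| P * m.
  move=> lt_iN; rewrite dvdn_mulr // /P (bigD1_seq i) ?mem_index_iota ?iota_uniq //=.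
  exact: dvdn_mulr.
have [||c [c_gt0 le_cm periodic]] := @unary_nfa_pump _ _ B a (P * m).
- by apply/lang_B; rewrite nae_tree_dvdn // => i /andP[_ /dvd_Pm].
- by rewrite leq_pmull.
apply: leq_trans (dvdn_leq c_gt0 _) le_cm.
by apply: nae_tree_period_dvd coprime_q dvd_Pm _ => t; apply/lang_B.
Qed.

End NaeTree.

Definition nae_dim a b c := a + b + c + (a * b + a * c + b * c).

Lemma nae_dim_le a b c X : 6 <= X -> 6 * a <= X -> 6 * b <= X -> 6 * c <= X ->
  6 * nae_dim a b c <= X ^ 2.
Proof. rewrite /nae_dim; nia. Qed.

Section WeightedAutomataClosure.
Variable Sigma : finType.
Implicit Types (w : seq Sigma) (c : rat).
Local Open Scope ring_scope.

Lemma wa_word_cons n (A : wautomaton Sigma n) a w :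
  wa_word A (a :: w) = wa_M A a *m wa_word A w.
Proof. by []. Qed.

Definition wa_const c : wautomaton Sigma 1 := WAut (fun=> 1%:M) c%:M 1%:M.

Lemma wa_weight_const c w : wa_weight (wa_const c) w = c.
Proof.
rewrite /wa_weight; have -> : wa_word (wa_const c) w = 1%:M.
  by elim: w => // a w IHw; rewrite wa_word_cons IHw mulmx1.
by rewrite !mulmx1 mxE eqxx mulr1n.
Qed.

Definition wa_add n1 n2 (A : wautomaton Sigma n1) (B : wautomaton Sigma n2) :
  wautomaton Sigma (n1 + n2) :=
  WAut (fun a => block_mx (wa_M A a) 0 0 (wa_M B a))
    (row_mx (wa_alpha A) (wa_alpha B)) (col_mx (wa_eta A) (wa_eta B)).

Lemma wa_weight_add n1 n2 (A : wautomaton Sigma n1) (B : wautomaton Sigma n2) w :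
  wa_weight (wa_add A B) w = wa_weight A w + wa_weight B w.
Proof.
rewrite /wa_weight.
have -> : wa_word (wa_add A B) w = block_mx (wa_word A w) 0 0 (wa_word B w).
  elim: w => [|a w IHw]; first exact: scalar_mx_block.
  by rewrite !wa_word_cons IHw mulmx_block !mulmx0 !mul0mx !addr0 !add0r.
by rewrite mul_row_block !mulmx0 addr0 add0r mul_row_col mxE.
Qed.

Definition wa_scale n c (A : wautomaton Sigma n) : wautomaton Sigma n :=
  WAut (wa_M A) (c *: wa_alpha A) (wa_eta A).

Lemma wa_weight_scale n c (A : wautomaton Sigma n) w :
  wa_weight (wa_scale c A) w = c * wa_weight A w.
Proof. by rewrite /wa_weight /wa_word /= -!scalemxAl mxE. Qed.

Definition wa_mul n1 n2 (A : wautomaton Sigma n1) (B : wautomaton Sigma n2) :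
  wautomaton Sigma (n1 * n2) :=
  WAut (fun a => wa_M A a *t wa_M B a) (wa_alpha A *t wa_alpha B) (wa_eta A *t wa_eta B).

Lemma tensmx11 m n : (1%:M : 'M[rat]_m) *t (1%:M : 'M[rat]_n) = 1%:M.
Proof.
apply/matrixP=> i j; case: (mxtens_indexP i) => i1 i2; case: (mxtens_indexP j) => j1 j2.
by rewrite tensmxE !mxE (can_eq (@mxtens_indexK m n)) xpair_eqE -natrM mulnb.
Qed.

Lemma wa_weight_mul n1 n2 (A : wautomaton Sigma n1) (B : wautomaton Sigma n2) w :
  wa_weight (wa_mul A B) w = wa_weight A w * wa_weight B w.
Proof.
rewrite /wa_weight; have -> : wa_word (wa_mul A B) w = wa_word A w *t wa_word B w.
  elim: w => [|a w IHw]; first by rewrite tensmx11.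
  by rewrite !wa_word_cons IHw -tensmx_mul.
have index00 : mxtens_index (ord0, ord0) = ord0 :> 'I_(1 * 1) by apply: val_inj.
by rewrite -[RHS]tensmxE index00 -!tensmx_mul.
Qed.

Definition wa_cycle n (f : nat -> rat) : wautomaton Sigma n.+1 :=
  WAut (fun=> \matrix_(i, j) (j == (i.+1 %% n.+1)%N :> nat)%:R)
    (delta_mx 0 ord0) (\col_i f i).

Lemma wa_weight_cycle n f w : wa_weight (wa_cycle n f) w = f (size w %% n.+1)%N.
Proof.
suff shift (i : 'I_n.+1) :
    delta_mx 0 i *m wa_word (wa_cycle n f) w = delta_mx 0 (inZp (i + size w)%N) :> 'rV_n.+1.
  by rewrite /wa_weight shift -rowE !mxE.
elim: w i => [|a w IHw] i.
  by rewrite mulmx1 addn0; congr delta_mx; apply: val_inj; rewrite /= modn_small.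
rewrite wa_word_cons mulmxA -rowE.
have -> : row i (wa_M (wa_cycle n f) a) = delta_mx 0 (inZp i.+1).
  by apply/matrixP=> k j; rewrite !mxE [k]ord1 eqxx -val_eqE.
by rewrite IHw; congr delta_mx; apply: val_inj; rewrite /= modnDml addSnnS.
Qed.

Definition wa_compl n (A : wautomaton Sigma n) : wautomaton Sigma (1 + n) :=
  wa_add (wa_const 1) (wa_scale (-1) A).

Lemma wa_compl_bool n (A : wautomaton Sigma n) (b : seq Sigma -> bool) :
  (forall w, wa_weight A w = (b w)%:R) ->
  is_IFA (wa_compl A) /\ (forall w, wa_lang (wa_compl A) w <-> ~~ b w).
Proof.
move=> weight_A; have weight w : wa_weight (wa_compl A) w = (~~ b w)%:R.
  by rewrite wa_weight_add wa_weight_const wa_weight_scale weight_A; case: (b w).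
by split=> w; rewrite /wa_lang weight; case: (b w); [left | right | |].
Qed.

Definition wa_nae n1 n2 n3 (A : wautomaton Sigma n1) (B : wautomaton Sigma n2)
    (C : wautomaton Sigma n3) : wautomaton Sigma (nae_dim n1 n2 n3) :=
  wa_add (wa_add (wa_add A B) C)
    (wa_scale (-1) (wa_add (wa_add (wa_mul A B) (wa_mul A C)) (wa_mul B C))).

Lemma wa_weight_nae n1 n2 n3 (A : wautomaton Sigma n1) (B : wautomaton Sigma n2)
    (C : wautomaton Sigma n3) w (x y z : bool) :
  wa_weight A w = x%:R -> wa_weight B w = y%:R -> wa_weight C w = z%:R ->
  wa_weight (wa_nae A B C) w = (nae x y z)%:R.
Proof.
move=> wA wB wC; rewrite !(wa_weight_add, wa_weight_scale, wa_weight_mul) {}wA {}wB {}wC.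
by case: x; case: y; case: z; apply/eqP.
Qed.

End WeightedAutomataClosure.

Section NaeTreeAutomaton.
Variables (Sigma : finType) (q : nat -> nat).

Fixpoint nae_tree_dim K lo : nat :=
  if K is K'.+1 then
    nae_dim (nae_tree_dim K' lo) (nae_tree_dim K' (lo + 3 ^ K'))
      (nae_tree_dim K' (lo + 3 ^ K' + 3 ^ K'))
  else (q lo).-1.+1. (* = q lo when q lo > 0; wa_cycle needs a positive period *)

Fixpoint nae_tree_aut K lo : wautomaton Sigma (nae_tree_dim K lo) :=
  match K with
  | 0 => wa_cycle Sigma (q lo).-1 (fun r => (r != 0)%:R%R)
  | K'.+1 => wa_nae (nae_tree_aut K' lo) (nae_tree_aut K' (lo + 3 ^ K'))
               (nae_tree_aut K' (lo + 3 ^ K' + 3 ^ K'))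
  end.

Lemma wa_weight_nae_tree K lo : (forall i, 0 < q i) -> forall w,
  wa_weight (nae_tree_aut K lo) w = (nae_tree q K lo (size w))%:R%R.
Proof.
move=> q_gt0 w; elim: K lo => [|K IHK] lo /=; last exact: wa_weight_nae.
by rewrite wa_weight_cycle prednK.
Qed.

Lemma nae_tree_dim_le K lo X : 6 <= X -> (forall i, i < lo + 3 ^ K -> 6 * q i <= X) ->
  6 * nae_tree_dim K lo <= X ^ 2 ^ K.
Proof.
move=> le6X; elim: K lo => [|K IHK] lo le_qX /=.
  by have := le_qX lo; case: (q lo) => [|n] /=; lia.
have le_6Q : 6 <= X ^ 2 ^ K.
  by apply: leq_trans (leq_pexp2l _ (expn_gt0 2 K)); rewrite ?expn1; lia.
rewrite expnS [2 * _]mulnC expnM; apply: nae_dim_le; rewrite // IHK // => i lt_i;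
  by apply: le_qX; rewrite expnS; lia.
Qed.

End NaeTreeAutomaton.

Lemma fact_moduli_gt0 N i : 0 < fact_moduli N i.
Proof. by rewrite /fact_moduli addn1. Qed.

Lemma fact_nae_tree_dim_le K : 0 < K ->
  1 + nae_tree_dim (fact_moduli (3 ^ K)) K 0 <= (3 ^ K)`! ^ (4 * 2 ^ K).
Proof.
move=> K_gt0; set N := 3 ^ K; set L := N`!.
have le3N : 3 <= N by rewrite -[3]expn1 leq_pexp2l.
have le_qL i : i < 0 + N -> 6 * fact_moduli N i <= L ^ 4.
  by rewrite add0n; apply: fact_moduli_le.
have le6L : 6 <= L ^ 4.
  apply: leq_trans (le_qL 0 _); last by rewrite add0n (leq_trans _ le3N).
  by rewrite leq_pmulr ?fact_moduli_gt0.
have le_X : L ^ 4 <= (L ^ 4) ^ 2 ^ K.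
  by rewrite -{1}[L ^ 4]expn1 leq_pexp2l ?(leq_trans _ le6L) ?expn_gt0.
by have := nae_tree_dim_le le6L le_qL; rewrite expnM; lia.
Qed.

Local Open Scope ring_scope.

Lemma poly_nat_bound (p : {poly rat}) :
  exists C d : nat, forall n : nat, (0 < n)%N -> p.[n%:R] <= (C * n ^ d)%:R.
Proof.
set S := \sum_(i < size p) `|p`_i|.
have S_ge0 : 0 <= S by apply: sumr_ge0.
exists (Num.Def.archi_bound S), (size p) => n n_gt0.
have n_ge1 : 1 <= n%:R :> rat by rewrite ler1n.
rewrite natrM natrX horner_coef.
apply: le_trans (ler_norm _) _; apply: le_trans (ler_norm_sum _ _ _) _.
apply: (@le_trans _ _ (S * n%:R ^+ size p)).
  rewrite /S mulr_suml; apply: ler_sum => i _.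
  rewrite normrM normrX [`|n%:R|]ger0_norm ?ler0n //; apply: ler_wpM2l => //.
  exact: ler_weXn2l (ltnW (ltn_ord i)).
by apply: ler_wpM2r; [exact: exprn_ge0 | exact: ltW (archi_boundP S_ge0)].
Qed.

Theorem proposition5 :
  ~ (exists p : {poly rat},
       forall (Sigma : finType) (n : nat) (A : wautomaton Sigma n),
         is_IFA A ->
         exists (m : nat) (B : nfa Sigma m),
           (m%:R <= p.[n%:R]) /\
           (forall w : seq Sigma, nfa_accepts B w <-> wa_lang A w)).
Proof.
case=> p Hp; have [C [d le_pC]] := poly_nat_bound p.
have [K K_gt0 le_CK] := exists_linear_pow2_le_pow3 C (4 * d).
set N := (3 ^ K)%N; set L := N`!; pose q := fact_moduli N.
have [IFA_A lang_A] :=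
  wa_compl_bool (wa_weight_nae_tree (Sigma := unit) K 0 (fact_moduli_gt0 N)).
have [m [B [le_m_p lang_B]]] := Hp _ _ _ IFA_A.
have le_LNm : (L ^ N <= m)%N.
  apply: leq_trans (fact_expn_le_prod_moduli N) (@nae_tree_nfa_states q _ _ B tt K _ _).
    exact: coprime_fact_moduli.
  by move=> k; rewrite lang_B lang_A size_nseq.
have le_m_dim : (m <= C * (1 + nae_tree_dim q K 0) ^ d)%N.
  by rewrite -(ler_nat rat); apply: le_trans le_m_p (le_pC _ _).
have gt1L : (1 < L)%N.
  by apply: leq_trans (fact_geq N); apply: leq_trans (leq_pexp2l _ K_gt0).
have : (L ^ N < L ^ N)%N.
  apply: leq_ltn_trans le_LNm (leq_ltn_trans le_m_dim _).
  have le_CN : (C + 4 * 2 ^ K * d <= N)%N by rewrite mulnAC.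
  apply: leq_ltn_trans (mul_expn_lt gt1L le_CN).
  by rewrite expnM leq_mul2l leq_exp2rW ?fact_nae_tree_dim_le ?orbT.
by rewrite ltnn.
Qed.
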